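(* Let $F(q,x)=\sum_{n\ge0}\sum_{\gamma\in\mathcal{D}_n} q^{\#duu(\gamma)}x^n$ and $V(q,x)=\sum_{n\ge0}\sum_{\gamma\in\mathcal{D}_n} q^{\#du(\gamma)}x^n$, where $\#w(\gamma)$ is the number of occurrences of the factor $w$ in $\gamma$ (so $\#du(\gamma)$ is the number of valleys). Let $SC_2(x)=\sum_{n\ge0} sc_2(\mathcal{D}_n)x^n$, where $sc_2(\mathcal{D}_n)$ is the number of saturated chains of length 2 in $\mathcal{D}_n$. Then $$ SC_2(x)=2\left[\frac{\partial F}{\partial q}\right]_{q=1}+\left[\frac{\partial^2 V}{\partial q^2}\right]_{q=1}. $$
   Context: A Dyck path of semilength $n$ is a lattice path from $(0,0)$ to $(2n,0)$ with steps $u=(1,1)$ and $d=(1,-1)$ never going below the $x$-axis, identified with a word over $\{u,d\}$. $\mathcal{D}_n$ is the set of Dyck paths of semilength $n$ ordered by containment: $\gamma\le\gamma'$ iff $\gamma$ lies weakly below $\gamma'$. A saturated chain of length $h$ is a sequence $\gamma^{(0)}<\cdots<\gamma^{(h)}$ in which each element covers the previous one. *)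

From HB Require Import structures.
From mathcomp Require Import all_boot all_order all_algebra.
Set Implicit Arguments. Unset Strict Implicit. Unset Printing Implicit Defensive.
Import Order.TTheory GRing.Theory Num.Theory.
Local Open Scope ring_scope.

(* Words over {u,d}: u = true, d = false. *)
Definition step (b : bool) : int := if b then 1 else -1.

Definition height (s : seq bool) : int := \sum_(b <- s) step b.

Definition isDyck (s : seq bool) : bool :=
  [forall i : 'I_(size s).+1, 0 <= height (take i s)] && (height s == 0).

Definition Dyck (n : nat) : {set (n.*2).-tuple bool} :=
  [set g : (n.*2).-tuple bool | isDyck (tval g)].

Definition dle n (g g' : (n.*2).-tuple bool) : bool :=
  [forall i : 'I_(n.*2).+1, height (take i g) <= height (take i g')].

Definition dlt n (g g' : (n.*2).-tuple bool) : bool := dle g g' && (g != g').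

Definition covers n (g g' : (n.*2).-tuple bool) : bool :=
  [&& g \in Dyck n, g' \in Dyck n, dlt g g' &
      [forall h in Dyck n, ~~ (dlt g h && dlt h g')]].

Definition sc2 (n : nat) : nat :=
  #|[set c : (n.*2).-tuple bool * (n.*2).-tuple bool * (n.*2).-tuple bool |
       covers c.1.1 c.1.2 && covers c.1.2 c.2]|.

Definition occ (w s : seq bool) : nat :=
  \sum_(i < size s) (take (size w) (drop i s) == w).

Definition duu : seq bool := [:: false; true; true].
Definition du : seq bool := [:: false; true].

(* coefficient of x^n in F(q,x), resp. V(q,x), as a polynomial in q *)
Definition Fcoef (n : nat) : {poly int} := \sum_(g in Dyck n) 'X^(occ duu (tval g)).
Definition Vcoef (n : nat) : {poly int} := \sum_(g in Dyck n) 'X^(occ du (tval g)).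

From mathcomp Require Import all_boot all_order all_algebra zify.
Set Implicit Arguments. Unset Strict Implicit. Unset Printing Implicit Defensive.
Import GRing.Theory.

(* The paths covering a Dyck path g are exactly those obtained by turning one
   valley du of g into a peak ud.  Raising the valley at position i destroys it,
   and creates a new valley at i-1 if the step before it is d and one at i+1 if
   the step after it is u; nothing else changes.  Summing over the v = #du valleys of
   g, the number of saturated chains of length 2 starting at g is therefore
   v(v-1) + #ddu + #duu.  Reversing and complementing a word is an involution of
   D_n exchanging ddu and duu, so sc_2(D_n) = sum_g (2 #duu + v(v-1)), which is
   the coefficient of x^n in 2 F_q(1,x) + V_qq(1,x). *)

Lemma forall_leqP (N : nat) (P : pred nat) :
  reflect (forall k, k <= N -> P k) [forall i : 'I_N.+1, P i].
Proof.
apply: (iffP forallP) => [H k le_kN | H i]; last exact: H _ (ltn_ord i).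
exact: H (Ordinal (le_kN : k < N.+1)).
Qed.

Lemma sum_ord_eq_and (N c : nat) (P : pred nat) :
  \sum_(j < N) ((j : nat) == c) && P j = (c < N) && P c.
Proof.
case: ltnP => [lt_cN | le_Nc]; last first.
  by rewrite big1 // => j _; case: eqP => // eq_jc; move: (ltn_ord j); rewrite eq_jc ltnNge le_Nc.
rewrite (bigD1 (Ordinal lt_cN)) //= eqxx big1 ?addn0 // => j ne_jc.
by case: eqP => // eq_jc; case/eqP: ne_jc; apply: val_inj.
Qed.

Lemma sum_ord_eq (N c : nat) : \sum_(j < N) ((j : nat) == c) = (c < N).
Proof.
rewrite -[c < N]andbT -(sum_ord_eq_and N c xpredT).
by apply: eq_bigr => j _; rewrite andbT.
Qed.

Section Height.
Local Open Scope ring_scope.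

Lemma height_count (s : seq bool) : height s = (size s)%:Z - 2 * (count negb s)%:Z.
Proof.
elim: s => [|b s IHs]; first by rewrite /height big_nil.
by rewrite /height big_cons -/(height s) IHs; case: b => /=; lia.
Qed.

Lemma height_cat s t : height (s ++ t) = height s + height t.
Proof. exact: big_cat. Qed.

Lemma height_rev s : height (rev s) = height s.
Proof. exact: big_rev. Qed.

Lemma height_map_negb s : height (map negb s) = - height s.
Proof. by rewrite /height big_map -sumrN; apply: eq_bigr => -[]. Qed.

End Height.

(* Paths are compared through the number of down steps in their prefixes: the
   height of a prefix of length k is k - 2 * downs, so the order and the Dyck
   condition become nat inequalities and heights of comparable paths differ by
   an even number. *)
Definition downs (s : seq bool) (k : nat) : nat := count negb (take k s).

Lemma downs0 s : downs s 0 = 0.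
Proof. by rewrite /downs take0. Qed.

Lemma downsS s k : k < size s -> downs s k.+1 = downs s k + ~~ nth true s k.
Proof. by move=> lt_ks; rewrite /downs (take_nth true lt_ks) -cats1 count_cat /= addn0. Qed.

Lemma downs_size s : downs s (size s) = count negb s.
Proof. by rewrite /downs take_size. Qed.

Lemma eq_downs (s t : seq bool) : size s = size t ->
  (forall k, k <= size s -> downs s k = downs t k) -> s = t.
Proof.
move=> eq_st eq_d; apply: (eq_from_nth (x0 := true)) => // j lt_js.
have lt_jt : j < size t by rewrite -eq_st.
move: (eq_d j (ltnW lt_js)) (eq_d j.+1 lt_js); rewrite !downsS //.
by case: (nth true s j); case: (nth true t j) => /=; lia.
Qed.

Lemma eq_take_drop_cons (T : eqType) (x0 : T) (s w : seq T) (a : T) (i : nat) :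
  (take (size w).+1 (drop i s) == a :: w) =
  [&& i < size s, nth x0 s i == a & take (size w) (drop i.+1 s) == w].
Proof.
case: (ltnP i (size s)) => [lt_is | le_si]; first by rewrite (drop_nth x0 lt_is).
by rewrite drop_oversize.
Qed.

Definition valley (s : seq bool) (i : nat) : bool := take 2 (drop i s) == du.

Definition ddu : seq bool := [:: false; false; true].

Lemma valleyE s i : valley s i = [&& i.+1 < size s, ~~ nth true s i & nth true s i.+1].
Proof.
rewrite /valley (eq_take_drop_cons true s [:: true]) (eq_take_drop_cons true s [::]).
rewrite eqbF_neg eqb_id take0 eqxx andbT.
by case: (ltnP i.+1 (size s)) => [lt_i1s | _]; rewrite ?(ltnW lt_i1s) ?andbF.
Qed.

Lemma valley_lt s i : valley s i -> i.+1 < size s.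
Proof. by rewrite valleyE => /andP[]. Qed.

Lemma take3_duuE s i :
  (take 3 (drop i s) == duu) = valley s i && (i.+2 < size s) && nth true s i.+2.
Proof.
rewrite /duu valleyE (eq_take_drop_cons true s [:: true; true]).
rewrite (eq_take_drop_cons true s [:: true]) (eq_take_drop_cons true s [::]).
rewrite take0 eqxx andbT eqbF_neg !eqb_id.
case: (ltnP i.+2 (size s)) => [lt_i2s | _]; last by rewrite /= !andbF.
by rewrite (ltnW lt_i2s) (ltnW (ltnW lt_i2s)) /= andbT andbA.
Qed.

Lemma take3_dduE s i : (take 3 (drop i s) == ddu) = ~~ nth true s i && valley s i.+1.
Proof.
rewrite /ddu (eq_take_drop_cons true s du) eqbF_neg -/(valley s i.+1) andbA.
by case: (boolP (valley s i.+1)) => [/valley_lt /ltnW /ltnW -> | _]; rewrite ?andbF.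
Qed.

Lemma occ_duE s : occ du s = \sum_(i < size s) valley s i.
Proof. by []. Qed.

Lemma occ_du_count s : occ du s = \sum_(i < size s | valley s i) 1.
Proof. by rewrite occ_duE [RHS]big_mkcond; apply: eq_bigr => i _; case: valley. Qed.

Lemma occ_duu_valleys s :
  occ duu s = \sum_(i < size s | valley s i) ((i.+2 < size s) && nth true s i.+2).
Proof.
rewrite /occ [RHS]big_mkcond; apply: eq_bigr => i _.
by rewrite take3_duuE -andbA; case: valley.
Qed.

Lemma occ_ddu_valleys s :
  occ ddu s = \sum_(i < size s | valley s i) ((0 < i) && ~~ nth true s i.-1).
Proof.
rewrite [RHS]big_mkcond /occ /=; case def_N: (size s) => [|N]; first by rewrite !big_ord0.
rewrite big_ord_recr big_ord_recl /= take3_dduE valleyE def_N ltnNge leqnSn !andbF.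
rewrite addn0 if_same add0n; apply: eq_bigr => i _.
by rewrite take3_dduE /bump add0n add1n andbC; case: valley.
Qed.

Definition raise (s : seq bool) (i : nat) : seq bool :=
  mkseq (fun j => if j == i then true else if j == i.+1 then false else nth true s j)
        (size s).

Lemma size_raise s i : size (raise s i) = size s.
Proof. exact: size_mkseq. Qed.

Lemma nth_raise s i j : j < size s ->
  nth true (raise s i) j = if j == i then true else if j == i.+1 then false else nth true s j.
Proof. exact: nth_mkseq. Qed.

Lemma raise_neq s i : valley s i -> raise s i != s.
Proof.
move=> v_i; have := valley_lt v_i; move: v_i; rewrite valleyE => /and3P[_ d_i _] lt_i1s.
by apply/eqP => eq_rs; move: d_i; rewrite -{1}eq_rs nth_raise ?eqxx // ltnW.
Qed.

Lemma raise_inj s i j : valley s i -> valley s j -> raise s i = raise s j -> i = j.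
Proof.
move=> v_i v_j eq_ij; have := valley_lt v_i; move: v_i v_j; rewrite !valleyE.
move=> /and3P[_ d_i _] /and3P[_ d_j _] lt_i1s.
have := congr1 (nth true ^~ i) eq_ij; rewrite !nth_raise ?eqxx 1?ltnW //.
by case: eqVneq => // _; case: eqVneq => // _ u_i; rewrite -u_i in d_i.
Qed.

Lemma downs_raise s i k : valley s i -> k <= size s ->
  downs (raise s i) k + (k == i.+1) = downs s k.
Proof.
rewrite valleyE => /and3P[lt_i1s d_i u_i1].
elim: k => [|k IHk] lt_ks; first by rewrite !downs0.
rewrite downsS ?size_raise // downsS // nth_raise //.
move: (IHk (ltnW lt_ks)) d_i u_i1.
case: (eqVneq k i.+1) => [-> | ne_ki1]; first by rewrite (gtn_eqF (ltnSn i)) /= eqSS; lia.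
by case: (ltngtP k i) => [|| ->]; case: eqVneq => //; lia.
Qed.

Lemma exists_raise_below (s t : seq bool) :
  size t = size s -> t != s -> downs t (size s) = downs s (size s) ->
  (forall k, k <= size s -> downs t k <= downs s k) ->
  exists2 i, valley s i & forall k, k <= size s -> downs t k <= downs (raise s i) k.
Proof.
move=> eq_size ne_ts eq_end le_ts; set N := size s in eq_end le_ts *.
pose P (k : 'I_N.+1) := downs t k < downs s k.
have [k0 Pk0] : exists k0, P k0.
  apply/existsP; apply: contraNT ne_ts => /existsPn not_P; apply/eqP.
  apply: eq_downs; rewrite eq_size // => k le_kN.
  by have := not_P (Ordinal (le_kN : k < N.+1)); have := le_ts k le_kN; rewrite /P /=; lia.
(* [k] is a lowest point of [s] among those where [t] lies strictly above [s]. *)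
have [[k lt_kN1] Pk k_max] := arg_maxnP (fun k : 'I_N.+1 => 2 * downs s k + (N - k)) Pk0.
rewrite /P /= in Pk k_max.
have [i def_k] : exists i, k = i.+1.
  by case: k Pk {k_max lt_kN1} => [|i]; [rewrite !downs0 | exists i].
have lt_kN : k < N.
  by rewrite ltn_neqAle -ltnS lt_kN1 andbT; apply: contraTneq Pk => ->; rewrite eq_end ltnn.
subst k; have lt_iN : i < N := ltnW lt_kN.
have d_i : ~~ nth true s i.
  apply/negP => u_i; have /= := k_max (Ordinal (leqW lt_iN)).
  by move: Pk; rewrite !downsS ?eq_size // u_i; case: (nth true t i) => /=; lia.
have u_i1 : nth true s i.+1.
  apply/negPn/negP => d_i1; have /= := k_max (Ordinal (lt_kN : i.+2 < N.+1)).
  move: Pk; rewrite (downsS lt_kN) (@downsS t i.+1) ?eq_size // (negbTE d_i1).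
  by case: (nth true t i.+1) => /=; lia.
have v_i : valley s i by rewrite valleyE lt_kN d_i u_i1.
exists i => // k le_kN; have := downs_raise v_i le_kN; have := le_ts k le_kN.
by case: eqVneq => [->|] /=; lia.
Qed.

Lemma valley_raise s i j : valley s i -> j < size s ->
  valley (raise s i) j + (j == i) =
  valley s j + (j == i.-1) && ((0 < i) && ~~ nth true s j)
             + (j == i.+1) && ((j.+1 < size s) && nth true s j.+1).
Proof.
rewrite !valleyE size_raise => /and3P[lt_i1s d_i u_i1] lt_js.
case: (ltnP j.+1 (size s)) => [lt_j1s | le_sj1]; last first.
  have ne_ji : j != i by apply/eqP; lia.
  have ne_ji1 : j != i.-1 by apply/eqP; lia.
  by rewrite (negbTE ne_ji) (negbTE ne_ji1) !andbF.
rewrite !nth_raise //=.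
have [-> | ne_ji] := eqVneq j i; first by rewrite eqxx !ifN_eq ?d_i ?u_i1 //=; lia.
have [-> | ne_ji1] := eqVneq j i.+1.
  by rewrite u_i1 !gtn_eqF ?ltnS ?leq_pred //= addn0.
have [def_i | ne_j1i] := eqVneq j.+1 i.
  by subst i; rewrite -pred_Sn eqxx (negbTE d_i) /=; case: (nth true s j).
have -> : (j == i.-1) && ((0 < i) && ~~ nth true s j) = false.
  by apply/negbTE; apply: contra ne_j1i => /andP[/eqP -> /andP[/prednK -> _]].
by rewrite eqSS (negbTE ne_ji) /= !addn0.
Qed.

Lemma occ_du_raise s i : valley s i ->
  (occ du (raise s i)).+1 =
  occ du s + (0 < i) && ~~ nth true s i.-1 + (i.+2 < size s) && nth true s i.+2.
Proof.
move=> v_i; have lt_i1s := valley_lt v_i.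
have : \sum_(j < size s) (valley (raise s i) j + ((j : nat) == i)) =
       \sum_(j < size s) (valley s j + ((j : nat) == i.-1) && ((0 < i) && ~~ nth true s j)
                          + ((j : nat) == i.+1) && ((j.+1 < size s) && nth true s j.+1)).
  by apply: eq_bigr => j _; apply: valley_raise.
rewrite !big_split /= sum_ord_eq (sum_ord_eq_and _ _ (fun j => (0 < i) && ~~ nth true s j)).
rewrite (sum_ord_eq_and _ _ (fun j => (j.+1 < size s) && nth true s j.+1)) -occ_duE.
rewrite [occ du (raise s i)]occ_duE size_raise lt_i1s (ltnW lt_i1s).
by rewrite (leq_ltn_trans (leq_pred i) (ltnW lt_i1s)) addn1 => ->.
Qed.

Lemma sum_occ_du_raise s :
  \sum_(i < size s | valley s i) occ du (raise s i) =
  occ du s * (occ du s).-1 + occ ddu s + occ duu s.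
Proof.
have sumS : \sum_(i < size s | valley s i) (occ du (raise s i)).+1 =
            occ du s * occ du s + occ ddu s + occ duu s.
  under eq_bigr => i v_i do rewrite occ_du_raise //.
  rewrite !big_split /= -occ_ddu_valleys -occ_duu_valleys; congr (_ + _ + _).
  by rewrite {3}occ_du_count big_distrr /=; apply: eq_bigr => i _; rewrite muln1.
move: sumS; under eq_bigr => i _ do rewrite -addn1.
rewrite big_split /= -occ_du_count.
by case: (occ du s) => [|v]; rewrite ?mulnSr; lia.
Qed.

Lemma occ_map (f : bool -> bool) (w s : seq bool) : injective f ->
  occ (map f w) (map f s) = occ w s.
Proof.
move=> f_inj; rewrite /occ !size_map; apply: eq_bigr => i _.
by rewrite -map_drop -map_take (inj_eq (inj_map f_inj)).
Qed.

Lemma occ_window (w s : seq bool) : 0 < size w ->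
  occ w s = \sum_(0 <= i < (size s).+1 - size w) (take (size w) (drop i s) == w).
Proof.
move=> w_gt0; rewrite /occ.
rewrite -(big_mkord xpredT (fun i => nat_of_bool (take (size w) (drop i s) == w))).
rewrite (big_cat_nat _ (n := (size s).+1 - size w)) //=; last by lia.
rewrite [X in _ + X]big_nat_cond [X in _ + X]big1 ?addn0 // => i /andP[/andP[le_i lt_iN] _].
by case: eqP => //= /(congr1 size); rewrite size_take size_drop; case: ltnP; lia.
Qed.

Lemma take_drop_rev (T : Type) (s : seq T) m i : i + m <= size s ->
  take m (drop i (rev s)) = rev (take m (drop (size s - m - i) s)).
Proof.
move=> le_ims; rewrite drop_rev take_rev size_takel ?leq_subr // take_drop.
by congr (rev (drop _ (take _ s))); lia.
Qed.

Lemma occ_rev (w s : seq bool) : occ (rev w) (rev s) = occ w s.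
Proof.
case: (posnP (size w)) => [/size0nil -> | w_gt0].
  have occ_nil t : occ [::] t = size t.
    by rewrite /occ -[RHS]card_ord -sum1_card; apply: eq_bigr => i _; rewrite take0.
  by rewrite !occ_nil size_rev.
rewrite !occ_window ?size_rev // big_nat_rev add0n; apply: eq_big_nat => i /andP[_ lt_iK].
rewrite take_drop_rev; last by lia.
by rewrite (inj_eq (can_inj revK)); congr (take _ (drop _ s) == w : nat); lia.
Qed.

Definition rc (s : seq bool) : seq bool := rev (map negb s).

Lemma rcK : involutive rc.
Proof. by move=> s; rewrite /rc map_rev revK (mapK negbK). Qed.

Lemma occ_rc w s : occ (rc w) (rc s) = occ w s.
Proof. by rewrite occ_rev occ_map //; apply: can_inj negbK. Qed.

Section ReverseComplementHeight.
Local Open Scope ring_scope.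

Lemma height_take_rc s k : (k <= size s)%N ->
  height (take k (rc s)) = height (take (size s - k) s) - height s.
Proof.
move=> le_ks; rewrite take_rev size_map -map_drop height_rev height_map_negb.
by rewrite -[X in _ - height X](cat_take_drop (size s - k)) height_cat opprD addNKr.
Qed.

Lemma isDyck_rc s : isDyck s -> isDyck (rc s).
Proof.
have size_rc : size (rc s) = size s by rewrite size_rev size_map.
case/andP => /(forall_leqP _ (fun k => 0 <= height (take k s))) s_ge0 /eqP s_end.
apply/andP; split.
  apply/(forall_leqP _ (fun k => 0 <= height (take k (rc s)))) => k.
  by rewrite size_rc => le_ks; rewrite height_take_rc // s_end subr0 s_ge0 ?leq_subr.
apply/eqP; rewrite -(take_size (rc s)) height_take_rc size_rc //.
by rewrite subnn take0 s_end subr0 /height big_nil.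
Qed.

End ReverseComplementHeight.

Section DyckPaths.
Variable n : nat.
Implicit Types g h : (n.*2).-tuple bool.

Lemma DyckP g :
  reflect ((forall k, k <= n.*2 -> 2 * downs g k <= k) /\ downs g n.*2 = n) (g \in Dyck n).
Proof.
have count_g : count negb g = downs g n.*2 by rewrite -downs_size size_tuple.
have prefixP := forall_leqP n.*2 (fun k => 0 <= height (take k g))%R.
rewrite inE /isDyck height_count size_tuple count_g.
apply: (iffP andP) => [[/prefixP g_ge0 /eqP g_end] | [g_ge0 g_end]]; split.
- move=> k le_kn; have := g_ge0 k le_kn.
  by rewrite height_count size_take size_tuple -/(downs g k); case: ltnP; lia.
- by lia.
- apply/prefixP => k le_kn; have := g_ge0 k le_kn.
  by rewrite height_count size_take size_tuple -/(downs g k); case: ltnP; lia.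
- by apply/eqP; lia.
Qed.

Lemma dleP g g' : reflect (forall k, k <= n.*2 -> downs g' k <= downs g k) (dle g g').
Proof.
apply: (iffP (forall_leqP _ (fun k => height (take k g) <= height (take k g'))%R)) => H k /H;
  by rewrite !height_count !size_take !size_tuple -/(downs g k) -/(downs g' k); lia.
Qed.

Lemma eq_downsT g h : (forall k, k <= n.*2 -> downs g k = downs h k) -> g = h.
Proof. by move=> eq_gh; apply/val_inj/eq_downs; rewrite ?size_tuple. Qed.

Fact raise_tupleP g i : size (raise g i) == n.*2.
Proof. by rewrite size_raise size_tuple. Qed.

Definition raiseT g i : (n.*2).-tuple bool := Tuple (raise_tupleP g i).

Lemma downs_raiseT g i k : valley g i -> k <= n.*2 ->
  downs (raiseT g i) k + (k == i.+1) = downs g k.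
Proof. by move=> v_i le_kn; apply: downs_raise; rewrite ?size_tuple. Qed.

Lemma raise_Dyck g i : g \in Dyck n -> valley g i -> raiseT g i \in Dyck n.
Proof.
move=> /DyckP[g_ge0 g_end] v_i; have := valley_lt v_i; rewrite size_tuple => lt_i1n.
apply/DyckP; split=> [k le_kn | ].
  by have := downs_raiseT v_i le_kn; have := g_ge0 k le_kn; lia.
by have := downs_raiseT v_i (leqnn _); case: eqVneq; lia.
Qed.

Lemma dlt_raise g i : valley g i -> dlt g (raiseT g i).
Proof.
move=> v_i; apply/andP; split.
  by apply/dleP => k le_kn; have := downs_raiseT v_i le_kn; lia.
by apply: contraTneq (raise_neq v_i) => /(congr1 val) /= <-; rewrite eqxx.
Qed.

Lemma between_raise g i h : valley g i -> dle g h -> dle h (raiseT g i) ->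
  h = g \/ h = raiseT g i.
Proof.
move=> v_i /dleP le_gh /dleP le_hr.
have [lt_i1 | ge_i1] := ltnP (downs h i.+1) (downs g i.+1); [right | left];
  apply: eq_downsT => k le_kn; have := le_gh k le_kn; have := le_hr k le_kn;
  by have := downs_raiseT v_i le_kn; case: eqVneq => [->|] /=; lia.
Qed.

Lemma covers_raise g i : g \in Dyck n -> valley g i -> covers g (raiseT g i).
Proof.
move=> Dg v_i; apply/and4P; split; rewrite ?raise_Dyck ?dlt_raise //.
apply/forallP => h; apply/implyP => _.
apply/negP => /andP[/andP[le_gh ne_gh] /andP[le_hr ne_hr]].
by case: (between_raise v_i le_gh le_hr) => eq_h; [move: ne_gh | move: ne_hr]; rewrite eq_h eqxx.
Qed.

Lemma covers_valley g g' : covers g g' -> exists2 i, valley g i & g' = raiseT g i.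
Proof.
case/and4P => Dg Dg' /andP[/dleP le_gg' ne_gg'] no_between.
have [[_ end_g] [_ end_g']] := (DyckP g Dg, DyckP g' Dg').
have eq_size : size g' = size g by rewrite !size_tuple.
have ne_g'g : val g' != val g by rewrite eq_sym.
have eq_end : downs g' (size g) = downs g (size g) by rewrite size_tuple end_g end_g'.
have le_g'g : forall k, k <= size g -> downs g' k <= downs g k by rewrite size_tuple.
have [i v_i le_rg'] := exists_raise_below eq_size ne_g'g eq_end le_g'g.
exists i => //; move/forall_inP: no_between => /(_ _ (raise_Dyck Dg v_i)).
rewrite dlt_raise //= /dlt negb_and negbK => /orP[/dleP[] | /eqP //].
by move: le_rg'; rewrite size_tuple.
Qed.

Lemma covers_imset g : g \in Dyck n ->
  [set g' | covers g g'] = [set raiseT g i | i : 'I_(n.*2) & valley g i].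
Proof.
move=> Dg; apply/setP => g'; rewrite inE.
apply/idP/imsetP => [/covers_valley[i v_i ->] | [i]].
  have lt_in : i < n.*2 by rewrite -(size_tuple g) ltnW // valley_lt.
  by exists (Ordinal lt_in); rewrite ?inE.
by rewrite inE => v_i ->; apply: covers_raise.
Qed.

Lemma sum_covers g (F : (n.*2).-tuple bool -> nat) : g \in Dyck n ->
  \sum_(g' | covers g g') F g' = \sum_(i < n.*2 | valley g i) F (raiseT g i).
Proof.
move=> Dg; rewrite (eq_bigl (mem [set g' | covers g g'])); last by move=> g' /=; rewrite inE.
rewrite covers_imset // big_imset => [|i j]; first by apply: eq_bigl => i; rewrite inE.
by rewrite !inE => v_i v_j /(congr1 val) /(raise_inj v_i v_j) /val_inj.
Qed.

Lemma sum1_covers g : g \in Dyck n -> \sum_(g' | covers g g') 1 = occ du g.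
Proof. by move=> Dg; rewrite sum_covers // occ_du_count size_tuple. Qed.

Definition rcT g : (n.*2).-tuple bool := [tuple of rev (map negb g)].

Lemma rcT_Dyck g : (rcT g \in Dyck n) = (g \in Dyck n).
Proof.
rewrite !inE; apply/idP/idP => [/isDyck_rc | /isDyck_rc //].
by rewrite [rc _]rcK.
Qed.

Lemma sum_occ_ddu_duu : \sum_(g in Dyck n) occ ddu g = \sum_(g in Dyck n) occ duu g.
Proof.
have rcTK : involutive rcT by move=> g; apply: val_inj; apply: rcK.
rewrite [RHS](reindex_inj (inv_inj rcTK)); apply: eq_big => g; first by rewrite rcT_Dyck.
by rewrite -[duu]/(rc ddu) occ_rc.
Qed.

Lemma sc2E : sc2 n = \sum_(g in Dyck n) \sum_(i < n.*2 | valley g i) occ du (raiseT g i).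
Proof.
have -> : sc2 n = \sum_(g0 : (n.*2).-tuple bool)
                  \sum_(g1 | covers g0 g1) \sum_(g2 | covers g1 g2) 1.
  by rewrite /sc2 -sum1_card !pair_big_dep; apply: eq_bigl => -[[g0 g1] g2]; rewrite inE.
rewrite (bigID (mem (Dyck n))) /= [X in _ + X]big1 ?addn0 => [|g0 not_Dg0]; last first.
  by rewrite big_pred0 // => g1; apply: contraNF not_Dg0 => /and4P[].
apply: eq_bigr => g0 Dg0; rewrite -(sum_covers (fun g : (n.*2).-tuple bool => occ du g)) //.
by apply: eq_bigr => g1 /and4P[_ Dg1 _ _]; apply: sum1_covers.
Qed.

Lemma sc2_occ : sc2 n = 2 * \sum_(g in Dyck n) occ duu g
                        + \sum_(g in Dyck n) occ du g * (occ du g).-1.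
Proof.
have per_path g : \sum_(i < n.*2 | valley g i) occ du (raiseT g i) =
                  occ du g * (occ du g).-1 + occ ddu g + occ duu g.
  by have := sum_occ_du_raise g; rewrite size_tuple.
rewrite sc2E (eq_bigr _ (fun g _ => per_path g)) !big_split /= sum_occ_ddu_duu.
by rewrite -addnA addnn mul2n addnC.
Qed.

End DyckPaths.

Local Open Scope ring_scope.

Lemma deriv_sum_Xn_at1 (R : nzRingType) (I : finType) (P : pred I) (e : I -> nat) :
  (\sum_(i | P i) 'X^(e i) : {poly R})^`().[1] = (\sum_(i | P i) e i)%N%:R.
Proof.
rewrite !raddf_sum horner_sum; apply: eq_bigr => i _ /=.
by rewrite derivXn hornerMn hornerXn expr1n.
Qed.

Lemma deriv2_sum_Xn_at1 (R : nzRingType) (I : finType) (P : pred I) (e : I -> nat) :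
  (\sum_(i | P i) 'X^(e i) : {poly R})^`(2).[1] = (\sum_(i | P i) e i * (e i).-1)%N%:R.
Proof.
rewrite derivSn derivn1 !raddf_sum horner_sum; apply: eq_bigr => i _ /=.
by rewrite derivXn derivMn derivXn hornerMn hornerMn hornerXn expr1n -mulrnA mulnC.
Qed.

Theorem mainTheorem3 (n : nat) :
  (sc2 n)%:Z = 2 * (Fcoef n)^`().[1] + (Vcoef n)^`(2).[1].
Proof.
by rewrite deriv_sum_Xn_at1 deriv2_sum_Xn_at1 sc2_occ !natz PoszD PoszM.
Qed.
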